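(* For all $X\subseteq\mathrm{Bunch}$ and $Y\in\mathcal C$, the set $X-\!\!\bullet\,Y=\{\Delta\in\mathrm{Bunch}\mid\forall\Delta'\in X.\ (\Delta\mathbin{,}\Delta')\in Y\}$ belongs to $\mathcal C$ (i.e. is closed).
   Context: Formulas of BI: $\varphi,\psi ::= \top \mid \bot \mid \varphi\wedge\psi \mid \varphi\vee\psi \mid \varphi\to\psi \mid \mathsf{emp} \mid \varphi\ast\psi \mid \varphi -\!\!\ast\, \psi \mid a$, $a\in\mathrm{Atom}$. Bunches are finite binary trees whose leaves are formulas or empty bunches $\varnothing_m,\varnothing_a$ and whose internal nodes are labelled by the multiplicative comma ($\Delta_1\mathbin{,}\Delta_2$) or the additive semicolon ($\Delta_1\mathbin{;}\Delta_2$). A bunched context $\Delta(-)$ is a bunch with one leaf replaced by a hole; $\Delta(\Gamma)$ fills it with $\Gamma$. Bunch equivalence $\equiv$ is the least equivalence relation making $\mathbin{,}$ commutative, associative with unit $\varnothing_m$, $\mathbin{;}$ commutative, associative with unit $\varnothing_a$, and closed under contexts; $\mathrm{Bunch}$ is the set of bunches modulo $\equiv$, a commutative monoid under $\Delta\cdot\Delta'=(\Delta\mathbin{,}\Delta')$ with unit $\varnothing_m$, and $X-\!\!\bullet\,Y$ denotes the residual of this monoid's pointwise product on $\mathcal P(\mathrm{Bunch})$. The cut-free BI sequent calculus ($\Delta\vdash_{\mathsf{cf}}\varphi$) has the rules: (ax) $a\vdash a$ for atoms $a$; (equiv) from $\Delta'\vdash\varphi$, $\Delta\equiv\Delta'$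 infer $\Delta\vdash\varphi$; (W;) from $\Delta(\Delta_1)\vdash\varphi$ infer $\Delta(\Delta_1\mathbin{;}\Delta_2)\vdash\varphi$; (C;) from $\Delta(\Delta_1\mathbin{;}\Delta_1)\vdash\varphi$ infer $\Delta(\Delta_1)\vdash\varphi$; (empR) $\varnothing_m\vdash\mathsf{emp}$; (empL) from $\Delta(\varnothing_m)\vdash\varphi$ infer $\Delta(\mathsf{emp})\vdash\varphi$; ($\ast$R) from $\Delta_1\vdash\varphi$, $\Delta_2\vdash\psi$ infer $\Delta_1\mathbin{,}\Delta_2\vdash\varphi\ast\psi$; ($\ast$L) from $\Delta(\varphi\mathbin{,}\psi)\vdash\chi$ infer $\Delta(\varphi\ast\psi)\vdash\chi$; ($-\!\ast$R) from $\Delta\mathbin{,}\varphi\vdash\psi$ infer $\Delta\vdash\varphi-\!\!\ast\,\psi$; ($-\!\ast$L) from $\Delta_1\vdash\varphi$, $\Delta(\Delta_2\mathbin{,}\psi)\vdash\chi$ infer $\Delta((\Delta_1\mathbin{,}\Delta_2)\mathbin{,}(\varphi-\!\!\ast\,\psi))\vdash\chi$; ($\top$R) $\varnothing_a\vdash\top$; ($\top$L) from $\Delta(\varnothing_a)\vdash\varphi$ infer $\Delta(\top)\vdash\varphi$; ($\wedge$R) from $\Delta_1\vdash\varphi$, $\Delta_2\vdash\psi$ infer $\Delta_1\mathbin{;}\Delta_2\vdash\varphi\wedge\psi$; ($\wedge$L) from $\Delta(\varphi\mathbin{;}\psi)\vdash\chi$ infer $\Delta(\varphi\wedge\psi)\vdash\chi$;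 ($\to$R) from $\Delta\mathbin{;}\varphi\vdash\psi$ infer $\Delta\vdash\varphi\to\psi$; ($\to$L) from $\Delta_1\vdash\varphi$, $\Delta(\Delta_2\mathbin{;}\psi)\vdash\chi$ infer $\Delta((\Delta_1\mathbin{;}\Delta_2)\mathbin{;}(\varphi\to\psi))\vdash\chi$; ($\bot$L) $\Delta(\bot)\vdash\varphi$; ($\vee$R1/2) from $\Delta\vdash\varphi$ (resp. $\Delta\vdash\psi$) infer $\Delta\vdash\varphi\vee\psi$; ($\vee$L) from $\Delta(\varphi)\vdash\chi$, $\Delta(\psi)\vdash\chi$ infer $\Delta(\varphi\vee\psi)\vdash\chi$. (No cut rule.) For a formula $\varphi$, $[\![\varphi]\!]^{\mathrm{out}}=\{\Delta\in\mathrm{Bunch}\mid\Delta\vdash_{\mathsf{cf}}\varphi\}$. For $X\subseteq\mathrm{Bunch}$, $\mathrm{cl}(X)=\bigcap\{[\![\varphi]\!]^{\mathrm{out}}\mid X\subseteq[\![\varphi]\!]^{\mathrm{out}}\}$, and $\mathcal C=\{X\subseteq\mathrm{Bunch}\mid X=\mathrm{cl}(X)\}$. *)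

Definition atom := nat.

Inductive formula : Type :=
| FTop | FBot
| FAnd (p q : formula) | FOr (p q : formula) | FImp (p q : formula)
| FEmp
| FStar (p q : formula) | FWand (p q : formula)
| FAtom (a : atom).

Inductive bunch : Type :=
| BForm (p : formula)
| BEmpM
| BEmpA
| BComma (d1 d2 : bunch)
| BSemi (d1 d2 : bunch).

Inductive bctx : Type :=
| CHole
| CCommaL (c : bctx) (d : bunch)
| CCommaR (d : bunch) (c : bctx)
| CSemiL (c : bctx) (d : bunch)
| CSemiR (d : bunch) (c : bctx).

Fixpoint fill (c : bctx) (g : bunch) : bunch :=
  match c with
  | CHole => g
  | CCommaL c d => BComma (fill c g) d
  | CCommaR d c => BComma d (fill c g)
  | CSemiL c d => BSemi (fill c g) d
  | CSemiR d c => BSemi d (fill c g)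
  end.

Inductive bequiv : bunch -> bunch -> Prop :=
| be_refl d : bequiv d d
| be_sym d1 d2 : bequiv d1 d2 -> bequiv d2 d1
| be_trans d1 d2 d3 : bequiv d1 d2 -> bequiv d2 d3 -> bequiv d1 d3
| be_comma_comm d1 d2 : bequiv (BComma d1 d2) (BComma d2 d1)
| be_comma_assoc d1 d2 d3 :
    bequiv (BComma (BComma d1 d2) d3) (BComma d1 (BComma d2 d3))
| be_comma_unit d : bequiv (BComma d BEmpM) d
| be_semi_comm d1 d2 : bequiv (BSemi d1 d2) (BSemi d2 d1)
| be_semi_assoc d1 d2 d3 :
    bequiv (BSemi (BSemi d1 d2) d3) (BSemi d1 (BSemi d2 d3))
| be_semi_unit d : bequiv (BSemi d BEmpA) d
| be_ctx c d1 d2 : bequiv d1 d2 -> bequiv (fill c d1) (fill c d2).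

Inductive cf : bunch -> formula -> Prop :=
| cf_ax a : cf (BForm (FAtom a)) (FAtom a)
| cf_equiv d d' p : cf d' p -> bequiv d d' -> cf d p
| cf_WSemi c d1 d2 p : cf (fill c d1) p -> cf (fill c (BSemi d1 d2)) p
| cf_CSemi c d1 p : cf (fill c (BSemi d1 d1)) p -> cf (fill c d1) p
| cf_empR : cf BEmpM FEmp
| cf_empL c p : cf (fill c BEmpM) p -> cf (fill c (BForm FEmp)) p
| cf_starR d1 d2 p q : cf d1 p -> cf d2 q -> cf (BComma d1 d2) (FStar p q)
| cf_starL c p q r :
    cf (fill c (BComma (BForm p) (BForm q))) r -> cf (fill c (BForm (FStar p q))) r
| cf_wandR d p q : cf (BComma d (BForm p)) q -> cf d (FWand p q)
| cf_wandL c d1 d2 p q r :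
    cf d1 p -> cf (fill c (BComma d2 (BForm q))) r ->
    cf (fill c (BComma (BComma d1 d2) (BForm (FWand p q)))) r
| cf_topR : cf BEmpA FTop
| cf_topL c p : cf (fill c BEmpA) p -> cf (fill c (BForm FTop)) p
| cf_andR d1 d2 p q : cf d1 p -> cf d2 q -> cf (BSemi d1 d2) (FAnd p q)
| cf_andL c p q r :
    cf (fill c (BSemi (BForm p) (BForm q))) r -> cf (fill c (BForm (FAnd p q))) r
| cf_impR d p q : cf (BSemi d (BForm p)) q -> cf d (FImp p q)
| cf_impL c d1 d2 p q r :
    cf d1 p -> cf (fill c (BSemi d2 (BForm q))) r ->
    cf (fill c (BSemi (BSemi d1 d2) (BForm (FImp p q)))) r
| cf_botL c p : cf (fill c (BForm FBot)) p
| cf_orR1 d p q : cf d p -> cf d (FOr p q)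
| cf_orR2 d p q : cf d q -> cf d (FOr p q)
| cf_orL c p q r :
    cf (fill c (BForm p)) r -> cf (fill c (BForm q)) r -> cf (fill c (BForm (FOr p q))) r.

(* Subsets of Bunch (= bunches modulo bequiv) are represented as predicates on
   raw bunches that are invariant under bequiv. *)
Definition bset := bunch -> Prop.

Definition equiv_closed (X : bset) : Prop :=
  forall d d', bequiv d d' -> X d -> X d'.

Definition sem_out (p : formula) : bset := fun d => cf d p.

Definition cl (X : bset) : bset :=
  fun d => forall p : formula, (forall g, X g -> sem_out p g) -> sem_out p d.

Definition closedC (X : bset) : Prop := forall d, X d <-> cl X d.

Definition resid (X Y : bset) : bset :=
  fun d => forall d', X d' -> Y (BComma d d').


(* Let [d] lie in the closure of [X -• Y], let [d'] be in [X], and let [Y] be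
   contained in [[p]]^out.  Reading [d'] as a formula ⌜d'⌝ (commas as [*],
   semicolons as [/\], units as [emp] and [T]), every [g] in [X -• Y] proves
   ⌜d'⌝ -* p, hence so does [d].  Cut-free derivations can be inverted through
   -*R and through the left rules of [*], [/\], [emp], [T]; the latter by
   exploding every such formula leaf of a derivable sequent at once.  So
   [d , d'] proves [p], i.e. [d , d'] is in cl Y = Y. *)

Fixpoint comp_ctx (c c' : bctx) : bctx :=
  match c with
  | CHole => c'
  | CCommaL c d => CCommaL (comp_ctx c c') d
  | CCommaR d c => CCommaR d (comp_ctx c c')
  | CSemiL c d => CSemiL (comp_ctx c c') d
  | CSemiR d c => CSemiR d (comp_ctx c c')
  end.

Lemma fill_comp_ctx c c' g : fill (comp_ctx c c') g = fill c (fill c' g).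
Proof. induction c; simpl; try rewrite IHc; reflexivity. Qed.

Lemma cl_extensive (X : bset) d : X d -> cl X d.
Proof. intros Xd p Hp. exact (Hp d Xd). Qed.

Definition admissible_repl (g g' : bunch) : Prop :=
  forall c r, cf (fill c g) r -> cf (fill c g') r.

Lemma admissible_repl_trans g1 g2 g3 :
  admissible_repl g1 g2 -> admissible_repl g2 g3 -> admissible_repl g1 g3.
Proof. intros H12 H23 c r H. exact (H23 c r (H12 c r H)). Qed.

Lemma admissible_repl_fill c0 g g' :
  admissible_repl g g' -> admissible_repl (fill c0 g) (fill c0 g').
Proof.
  intros Hg c r H.
  rewrite <- fill_comp_ctx in *.
  exact (Hg _ r H).
Qed.

Lemma admissible_repl_comma g1 g1' g2 g2' :
  admissible_repl g1 g1' -> admissible_repl g2 g2' ->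
  admissible_repl (BComma g1 g2) (BComma g1' g2').
Proof.
  intros H1 H2.
  apply (admissible_repl_trans _ (BComma g1' g2)).
  - exact (admissible_repl_fill (CCommaL CHole g2) _ _ H1).
  - exact (admissible_repl_fill (CCommaR g1' CHole) _ _ H2).
Qed.

Lemma admissible_repl_semi g1 g1' g2 g2' :
  admissible_repl g1 g1' -> admissible_repl g2 g2' ->
  admissible_repl (BSemi g1 g2) (BSemi g1' g2').
Proof.
  intros H1 H2.
  apply (admissible_repl_trans _ (BSemi g1' g2)).
  - exact (admissible_repl_fill (CSemiL CHole g2) _ _ H1).
  - exact (admissible_repl_fill (CSemiR g1' CHole) _ _ H2).
Qed.

Fixpoint formula_of_bunch (d : bunch) : formula :=
  match d with
  | BForm p => p
  | BEmpM => FEmp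
  | BEmpA => FTop
  | BComma a b => FStar (formula_of_bunch a) (formula_of_bunch b)
  | BSemi a b => FAnd (formula_of_bunch a) (formula_of_bunch b)
  end.

Lemma admissible_repl_formula_of_bunch d :
  admissible_repl d (BForm (formula_of_bunch d)).
Proof.
  induction d; simpl.
  - intros c r H; exact H.
  - exact cf_empL.
  - exact cf_topL.
  - exact (admissible_repl_trans _ _ _
             (admissible_repl_comma _ _ _ _ IHd1 IHd2)
             (fun c r => cf_starL c _ _ r)).
  - exact (admissible_repl_trans _ _ _
             (admissible_repl_semi _ _ _ _ IHd1 IHd2)
             (fun c r => cf_andL c _ _ r)).
Qed.

Fixpoint explode_formula (p : formula) : bunch :=
  match p with
  | FStar a b => BComma (explode_formula a) (explode_formula b)
  | FAnd a b => BSemi (explode_formula a) (explode_formula b)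
  | FEmp => BEmpM
  | FTop => BEmpA
  | _ => BForm p
  end.

Fixpoint explode_bunch (d : bunch) : bunch :=
  match d with
  | BForm p => explode_formula p
  | BEmpM => BEmpM
  | BEmpA => BEmpA
  | BComma a b => BComma (explode_bunch a) (explode_bunch b)
  | BSemi a b => BSemi (explode_bunch a) (explode_bunch b)
  end.

Fixpoint explode_ctx (c : bctx) : bctx :=
  match c with
  | CHole => CHole
  | CCommaL c d => CCommaL (explode_ctx c) (explode_bunch d)
  | CCommaR d c => CCommaR (explode_bunch d) (explode_ctx c)
  | CSemiL c d => CSemiL (explode_ctx c) (explode_bunch d)
  | CSemiR d c => CSemiR (explode_bunch d) (explode_ctx c)
  end.

Lemma explode_bunch_fill c g :
  explode_bunch (fill c g) = fill (explode_ctx c) (explode_bunch g).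
Proof. induction c; simpl; try rewrite IHc; reflexivity. Qed.

Lemma explode_formula_of_bunch d :
  explode_formula (formula_of_bunch d) = explode_bunch d.
Proof. induction d; simpl; try rewrite IHd1, IHd2; reflexivity. Qed.

Lemma bequiv_explode d d' :
  bequiv d d' -> bequiv (explode_bunch d) (explode_bunch d').
Proof.
  induction 1; simpl; try (econstructor; eauto; fail).
  rewrite !explode_bunch_fill. apply be_ctx; assumption.
Qed.

Lemma admissible_repl_unexplode_formula p :
  admissible_repl (explode_formula p) (BForm p).
Proof.
  induction p; simpl; try (intros c r H; exact H).
  - exact cf_topL.
  - exact (admissible_repl_trans _ _ _
             (admissible_repl_semi _ _ _ _ IHp1 IHp2)
             (fun c r => cf_andL c _ _ r)).
  - exact cf_empL.
  - exact (admissible_repl_trans _ _ _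
             (admissible_repl_comma _ _ _ _ IHp1 IHp2)
             (fun c r => cf_starL c _ _ r)).
Qed.

Lemma admissible_repl_unexplode d : admissible_repl (explode_bunch d) d.
Proof.
  induction d; simpl; try (intros c r H; exact H).
  - apply admissible_repl_unexplode_formula.
  - apply admissible_repl_comma; assumption.
  - apply admissible_repl_semi; assumption.
Qed.

(* Exploding a whole sequent turns each left rule for [*], [/\], [emp], [T]
   into an instance of the conclusion; the remaining rules are preserved,
   the formulas they introduce being re-imploded. *)
Lemma cf_explode d r : cf d r -> cf (explode_bunch d) r.
Proof.
  induction 1; rewrite ?explode_bunch_fill in *; simpl in *.
  - apply cf_ax.
  - eapply cf_equiv; [eassumption | apply bequiv_explode; assumption].
  - apply cf_WSemi; assumption.
  - apply cf_CSemi; assumption.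
  - apply cf_empR.
  - assumption.
  - apply cf_starR; assumption.
  - assumption.
  - apply cf_wandR.
    exact (admissible_repl_unexplode_formula p (CCommaR _ CHole) _ IHcf).
  - apply cf_wandL; [assumption |].
    exact (admissible_repl_fill (CCommaR _ CHole) _ _
             (admissible_repl_unexplode_formula q) _ _ IHcf2).
  - apply cf_topR.
  - assumption.
  - apply cf_andR; assumption.
  - assumption.
  - apply cf_impR.
    exact (admissible_repl_unexplode_formula p (CSemiR _ CHole) _ IHcf).
  - apply cf_impL; [assumption |].
    exact (admissible_repl_fill (CSemiR _ CHole) _ _
             (admissible_repl_unexplode_formula q) _ _ IHcf2).
  - apply cf_botL.
  - apply cf_orR1; assumption.
  - apply cf_orR2; assumption.
  - apply cf_orL.
    + exact (admissible_repl_unexplode_formula p _ _ IHcf1).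
    + exact (admissible_repl_unexplode_formula q _ _ IHcf2).
Qed.

Lemma cf_wandR_inv d p q : cf d (FWand p q) -> cf (BComma d (BForm p)) q.
Proof.
  intros H. remember (FWand p q) as w eqn:Ew.
  induction H; try discriminate.
  - eapply cf_equiv; [apply IHcf; assumption |].
    apply (be_ctx (CCommaL CHole (BForm p))); assumption.
  - apply (cf_WSemi (CCommaL c (BForm p))); apply IHcf; assumption.
  - apply (cf_CSemi (CCommaL c (BForm p))); apply IHcf; assumption.
  - apply (cf_empL (CCommaL c (BForm p))); apply IHcf; assumption.
  - apply (cf_starL (CCommaL c (BForm p))); apply IHcf; assumption.
  - injection Ew; intros; subst; assumption.
  - apply (cf_wandL (CCommaL c (BForm p))); [assumption |].
    apply IHcf2; assumption.
  - apply (cf_topL (CCommaL c (BForm p))); apply IHcf; assumption.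
  - apply (cf_andL (CCommaL c (BForm p))); apply IHcf; assumption.
  - apply (cf_impL (CCommaL c (BForm p))); [assumption |].
    apply IHcf2; assumption.
  - apply (cf_botL (CCommaL c (BForm p))).
  - apply (cf_orL (CCommaL c (BForm p))); [apply IHcf1 | apply IHcf2];
      assumption.
Qed.

Lemma cf_wand_formula_of_bunch d d' p :
  cf d (FWand (formula_of_bunch d') p) <-> cf (BComma d d') p.
Proof.
  split; intros H.
  - apply cf_wandR_inv, cf_explode in H. simpl in H.
    rewrite explode_formula_of_bunch in H.
    exact (admissible_repl_unexplode (BComma d d') CHole p H).
  - apply cf_wandR.
    exact (admissible_repl_formula_of_bunch d' (CCommaR d CHole) p H).
Qed.

Theorem lemma6p4 (X Y : bset) :
  equiv_closed X -> closedC Y -> closedC (resid X Y).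
Proof.
  intros _ HY d; split; [apply cl_extensive |].
  intros Hcl d' Xd'. apply HY. intros p Hp.
  apply cf_wand_formula_of_bunch, Hcl.
  intros g Hg. apply cf_wand_formula_of_bunch, Hp, Hg, Xd'.
Qed.
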